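(* Let $G$ be any graph on $n$ vertices. For each edge $e\in E(G)$ let $c(e)$ denote the largest $r$ such that $e$ is an edge of a subgraph of $G$ isomorphic to $K_r$ (so $c(e)\ge 2$). Then \[ \sum_{e\in E(G)} \frac{c(e)}{c(e)-1} \le \frac{n^2}{2}, \] and equality holds if and only if $G$ is a complete multipartite graph with at least two parts, all parts having the same size.
   Context: $K_r$ denotes the complete graph on $r$ vertices. Graphs are finite and simple. *)

From HB Require Import structures.
From mathcomp Require Import all_boot all_order all_algebra.
Set Implicit Arguments. Unset Strict Implicit. Unset Printing Implicit Defensive.
Import Order.TTheory GRing.Theory Num.Theory.

Definition simple_graph (V : finType) (e : rel V) : Prop :=
  symmetric e /\ irreflexive e.

Definition edges (V : finType) (e : rel V) : {set {set V}} :=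
  [set E : {set V} | [exists x : V, exists y : V, e x y && (E == [set x; y])]].

Definition clique (V : finType) (e : rel V) (S : {set V}) : bool :=
  [forall x in S, forall y in S, (x != y) ==> e x y].

Definition cnum (V : finType) (e : rel V) (A : {set V}) : nat :=
  \max_(S : {set V} | clique e S && (A \subset S)) #|S|.

Definition balanced_complete_multipartite (V : finType) (e : rel V) : Prop :=
  exists (k : nat) (f : V -> 'I_k),
    [/\ 2 <= k,
        (forall x y, e x y = (f x != f y)) &
        (forall i j : 'I_k, #|f @^-1: [set i]| = #|f @^-1: [set j]|)].

(* Weigh an edge of clique number c by w(c) = c/(c-1) and let T(W) be the sum of
   the weights over ordered pairs of adjacent vertices of W, clique numbers being
   computed inside W.  Then T(W) <= |W|^2, by induction on W: pick a maximum clique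
   K of W, of size t.  Pairs inside K have clique number >= t and contribute at
   most t(t-1) w(t) = t^2.  A vertex v outside K with a neighbours in K has a < t,
   and each of these edges lies in the clique v + (N(v) ∩ K), so together they
   weigh at most a w(a+1) = a+1 <= t.  Pairs outside K weigh at most
   T(W \ K) <= |W \ K|^2, since clique numbers only grow with W.  Hence
   T(W) <= (t + |W \ K|)^2.

   In the equality case every vertex outside K misses exactly one vertex of K;
   grouping vertices by the vertex they miss (a vertex of K misses itself), an
   exchange argument shows that G is complete t-partite.  Then
   T = w(t) (n^2 - sum_i p_i^2) = n^2 forces t sum_i p_i^2 = n^2 = (sum_i p_i)^2,
   so all parts have the same size. *)

From HB Require Import structures.
From mathcomp Require Import all_boot all_order all_algebra.
Import Order.TTheory GRing.Theory Num.Theory.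
Local Open Scope ring_scope.
From mathcomp Require Import ring lra zify.
Set Implicit Arguments. Unset Strict Implicit.

Lemma eq_const_of_sum_sqr (R : realDomainType) (I : finType) (D : {set I}) (p : I -> R) N :
  \sum_(u in D) p u = N -> #|D|%:R * \sum_(u in D) p u ^+ 2 = N ^+ 2 ->
  {in D, forall u, #|D|%:R * p u = N}.
Proof.
move=> sum_p sum_p2 u uD; set t : R := #|D|%:R.
have dev0 : \sum_(v in D) (t * p v - N) ^+ 2 = 0.
  have -> : \sum_(v in D) (t * p v - N) ^+ 2
         = t * (t * \sum_(v in D) p v ^+ 2) - 2%:R * t * N * \sum_(v in D) p v + N ^+ 2 *+ #|D|.
    rewrite -sumr_const !mulr_sumr -sumrB -big_split /=.
    by apply: eq_bigr => v _; ring.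
  by rewrite sum_p sum_p2 -mulr_natl; ring.
have /eqP := psumr_eq0P (fun v _ => sqr_ge0 (t * p v - N)) dev0 uD.
by rewrite sqrf_eq0 subr_eq0 => /eqP.
Qed.

Definition cweight (c : nat) : rat := c%:R / (c%:R - 1).

Lemma cweight_le1 c : (c <= 1)%N -> cweight c = 0.
Proof. by case: c => [|[|c]] //= _; rewrite /cweight ?mul0r // subrr invr0 mulr0. Qed.

Lemma cweight_ge0 c : 0 <= cweight c.
Proof.
case: (leqP c 1) => [/cweight_le1 -> //|c2]; rewrite /cweight divr_ge0 //.
by rewrite subr_ge0 ler1n ltnW.
Qed.

Lemma cweight_le a b : (2 <= a)%N -> (a <= b)%N -> cweight b <= cweight a.
Proof.
move=> a2 ab; rewrite /cweight.
have a1 : 1 < (a%:R : rat) by rewrite ltr1n.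
have ab' : (a%:R : rat) <= b%:R by rewrite ler_nat.
have b1 : 0 < (b%:R : rat) - 1 by lra.
rewrite ler_pdivlMr ?subr_gt0 // mulrAC ler_pdivrMr //; nra.
Qed.

Lemma mulr_cweightS a : (0 < a)%N -> a%:R * cweight a.+1 = a.+1%:R.
Proof.
move=> a0; rewrite /cweight -addn1 natrD addrK mulrC divfK //.
by rewrite pnatr_eq0 -lt0n.
Qed.

Lemma cweight_complete_le t : (t * t.-1)%:R * cweight t <= (t ^ 2)%:R.
Proof.
case: t => [|t]; first by rewrite mul0r.
case: t => [|t]; first by rewrite mul0r.
by rewrite natrM -mulrA mulr_cweightS // -natrM mulnn.
Qed.

Section Graph.

Variables (V : finType) (e : rel V).
Hypotheses (e_sym : symmetric e) (e_irr : irreflexive e).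

Lemma cliqueP (S : {set V}) :
  reflect {in S &, forall x y, x != y -> e x y} (clique e S).
Proof.
apply: (iffP forall_inP) => [cS x y xS yS | cS x xS].
  by have /forall_inP/(_ y yS)/implyP := cS x xS.
by apply/forall_inP => y yS; apply/implyP; apply: cS.
Qed.

Lemma clique2 x y : e x y -> clique e [set x; y].
Proof.
move=> exy; apply/cliqueP => a b; rewrite !inE.
by case/orP=> /eqP-> /orP[]/eqP->; rewrite ?eqxx // e_sym.
Qed.

Lemma clique_subset (S T : {set V}) : T \subset S -> clique e S -> clique e T.
Proof.
move=> /subsetP TS /cliqueP cS; apply/cliqueP => x y xT yT; exact: cS (TS x xT) (TS y yT).
Qed.

Lemma clique_setU1 v (S : {set V}) :
  clique e S -> {in S, forall u, e v u} -> clique e (v |: S).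
Proof.
move=> /cliqueP cS adj; apply/cliqueP => a b; rewrite !inE.
case/orP => [/eqP->|aS] /orP[/eqP->|bS] ab.
- by rewrite eqxx in ab.
- exact: adj.
- by rewrite e_sym adj.
- exact: cS.
Qed.

Definition cnum_in (W A : {set V}) : nat :=
  \max_(S : {set V} | [&& clique e S, A \subset S & S \subset W]) #|S|.

Lemma cnumE (A : {set V}) : cnum e A = cnum_in [set: V] A.
Proof. by apply: eq_bigl => S; rewrite subsetT andbT. Qed.

Lemma cnum_in_ge (W A S : {set V}) :
  clique e S -> A \subset S -> S \subset W -> (#|S| <= cnum_in W A)%N.
Proof. by move=> cS AS SW; apply: leq_bigmax_cond; rewrite cS AS. Qed.

Lemma cnum_inS (W1 W2 A : {set V}) : W1 \subset W2 -> (cnum_in W1 A <= cnum_in W2 A)%N.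
Proof.
move=> W12; apply/bigmax_leqP => S /and3P[cS AS SW].
by apply: cnum_in_ge; rewrite // (subset_trans SW W12).
Qed.

Lemma cnum_in_edge (W : {set V}) x y :
  e x y -> x \in W -> y \in W -> (2 <= cnum_in W [set x; y])%N.
Proof.
move=> exy xW yW; have xy : x != y by apply: contraTneq exy => ->; rewrite e_irr.
have := cnum_in_ge (clique2 exy) (subxx _); rewrite cards2 xy; apply.
by apply/subsetP => z; rewrite !inE => /orP[]/eqP->.
Qed.

Definition pair_weight (W : {set V}) (x y : V) : rat :=
  if e x y then cweight (cnum_in W [set x; y]) else 0.

(* The sum runs over ordered pairs, so [total_weight [set: V]] is twice the edge
   sum of the theorem. *)
Definition total_weight (W : {set V}) : rat :=
  \sum_(x in W) \sum_(y in W) pair_weight W x y.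

Lemma pair_weightC (W : {set V}) x y : pair_weight W x y = pair_weight W y x.
Proof. by rewrite /pair_weight e_sym setUC. Qed.

Lemma eq_set2 (x y a b : V) :
  x != y -> [set x; y] = [set a; b] -> ((x, y) == (a, b)) || ((x, y) == (b, a)).
Proof.
move=> xy E; rewrite !xpair_eqE.
have : a \in [set x; y] by rewrite E set21.
have : x \in [set a; b] by rewrite -E set21.
have : y \in [set a; b] by rewrite -E set22.
by rewrite !inE => /orP[]/eqP yv /orP[]/eqP xv /orP[]/eqP av; subst; move: xy;
  rewrite ?eqxx ?orbT.
Qed.

Lemma card_edge_pairs E : E \in edges e ->
  #|[pred p : V * V | e p.1 p.2 && ([set p.1; p.2] == E)]| = 2%N.
Proof.
rewrite inE => /existsP[a /existsP[b /andP[eab /eqP->]]].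
have ab : a != b by apply: contraTneq eab => ->; rewrite e_irr.
have <- : #|[set (a, b); (b, a)]| = 2%N by rewrite cards2 xpair_eqE negb_and ab.
apply: eq_card => -[x y]; rewrite !inE /=; apply/idP/idP.
  move=> /andP[exy /eqP]; apply: eq_set2.
  by apply: contraTneq exy => ->; rewrite e_irr.
by case/orP => /eqP[-> ->]; rewrite ?eab ?eqxx // e_sym eab setUC eqxx.
Qed.

Lemma sum_edges_cweight :
  \sum_(E in edges e) cweight (cnum e E) = total_weight [set: V] / 2%:R.
Proof.
rewrite /total_weight pair_big_dep /= (bigID (fun p => e p.1 p.2)) /=.
rewrite [X in _ + X]big1 ?addr0 => [|p /andP[_ /negbTE]]; last first.
  by rewrite /pair_weight => ->.
rewrite (eq_big (fun p => e p.1 p.2) (fun p => cweight (cnum e [set p.1; p.2]))); last 2 first.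
- by move=> p; rewrite !inE.
- by move=> p /andP[_ ep]; rewrite /pair_weight ep cnumE.
rewrite (partition_big (fun p : V * V => [set p.1; p.2]) (mem (edges e))) /=; last first.
  by move=> [a b] /= eab; rewrite inE; apply/existsP; exists a; apply/existsP; exists b; rewrite eab eqxx.
rewrite mulr_suml; apply: eq_bigr => E EE.
rewrite (eq_bigr (fun _ => cweight (cnum e E))) => [|p /andP[_ /eqP->] //].
by rewrite sumr_const card_edge_pairs // -[_ *+ 2]mulr_natr mulfK // pnatr_eq0.
Qed.

Lemma sum_pair_weight_sub (W' W : {set V}) : W' \subset W ->
  \sum_(x in W') \sum_(y in W') pair_weight W x y <= total_weight W'.
Proof.
move=> W'W; apply: ler_sum => x xW'; apply: ler_sum => y yW'.
rewrite /pair_weight; case: ifP => // exy.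
by apply: cweight_le; [apply: cnum_in_edge | apply: cnum_inS].
Qed.

Definition max_clique (W K : {set V}) : Prop :=
  [/\ clique e K, K \subset W &
      forall S : {set V}, clique e S -> S \subset W -> (#|S| <= #|K|)%N].

Lemma max_clique_exists (W : {set V}) : exists K, max_clique W K.
Proof.
have clique0 : clique e set0 && (set0 \subset W).
  by rewrite sub0set andbT; apply/cliqueP => x y; rewrite inE.
case: (@arg_maxnP _ set0 (fun S => clique e S && (S \subset W)) (fun S => #|S|) clique0).
move=> K /andP[cK KW] maxK.
by exists K; split => // S cS SW; apply: maxK; rewrite cS.
Qed.

Definition nbhd (v : V) : {set V} := [set u | e v u].

Section MaxClique.

Variables W K : {set V}.
Hypothesis maxK : max_clique W K.

Lemma max_clique_gt0 x : x \in W -> (0 < #|K|)%N.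
Proof.
case: maxK => _ _ maxS xW; rewrite -(cards1 x) maxS ?sub1set //.
by apply/cliqueP => a b; rewrite !inE => /eqP-> /eqP->; rewrite eqxx.
Qed.

Lemma clique_setU1_nbhd v : clique e (v |: (K :&: nbhd v)).
Proof.
case: maxK => cK _ _; apply: clique_setU1; first exact: clique_subset (subsetIl _ _) cK.
by move=> u; rewrite !inE => /andP[].
Qed.

Lemma card_setU1_nbhd v : v \notin K -> #|v |: (K :&: nbhd v)| = (#|K :&: nbhd v|).+1.
Proof. by move=> vK; rewrite cardsU1 inE (negbTE vK). Qed.

Lemma setU1_nbhd_sub v : v \in W -> v |: (K :&: nbhd v) \subset W.
Proof.
case: maxK => _ KW _ vW; rewrite subUset sub1set vW.
exact: subset_trans (subsetIl _ _) KW.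
Qed.

Lemma card_nbhd_lt v : v \in W -> v \notin K -> (#|K :&: nbhd v| < #|K|)%N.
Proof.
case: maxK => _ _ maxS vW vK; rewrite -ltnS -card_setU1_nbhd // ltnS.
by rewrite maxS ?clique_setU1_nbhd ?setU1_nbhd_sub.
Qed.

Definition cross_weight (v : V) : rat := \sum_(u in K) pair_weight W v u.

Lemma cross_weight_le_nbhd v : v \in W -> v \notin K ->
  cross_weight v <= (#|K :&: nbhd v|).+1%:R.
Proof.
move=> vW vK; set a := #|K :&: nbhd v|.
have cross_le : cross_weight v <= a%:R * cweight a.+1.
  rewrite mulr_natl -sumr_const /cross_weight (bigID (mem (nbhd v))) /=.
  rewrite [X in _ + X]big1 ?addr0; last first.
    by move=> u /andP[_]; rewrite inE /pair_weight => /negbTE->.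
  rewrite (eq_bigl (mem (K :&: nbhd v))); last by move=> u; rewrite !inE.
  apply: ler_sum => u; rewrite !inE => /andP[uK evu]; rewrite /pair_weight evu.
  apply: cweight_le.
    by rewrite ltnS card_gt0; apply/set0Pn; exists u; rewrite !inE uK.
  rewrite -card_setU1_nbhd //; apply: cnum_in_ge.
  - exact: clique_setU1_nbhd.
  - by rewrite subUset !sub1set setU11 !inE uK evu orbT.
  - exact: setU1_nbhd_sub.
case: a cross_le => [|a] cross_le; first by rewrite mul0r in cross_le; apply: le_trans cross_le _.
by rewrite mulr_cweightS in cross_le.
Qed.

Lemma cross_weight_le v : v \in W -> v \notin K -> cross_weight v <= #|K|%:R.
Proof.
move=> vW vK; apply: le_trans (cross_weight_le_nbhd vW vK) _.
by rewrite ler_nat card_nbhd_lt.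
Qed.

Lemma total_weight_split :
  total_weight W = \sum_(x in K) \sum_(y in K) pair_weight W x y
                 + 2%:R * \sum_(v in W :\: K) cross_weight v
                 + \sum_(x in W :\: K) \sum_(y in W :\: K) pair_weight W x y.
Proof.
case: maxK => _ /setIidPr WK _.
have splitK F : \sum_(x in W) F x = \sum_(x in K) F x + \sum_(x in W :\: K) F x :> rat.
  by rewrite (big_setID K) WK.
rewrite /total_weight splitK !(eq_bigr _ (fun x _ => splitK _)) !big_split /=.
have -> : \sum_(x in K) \sum_(v in W :\: K) pair_weight W x v
          = \sum_(v in W :\: K) cross_weight v.
  by rewrite exchange_big; apply: eq_bigr => v _; apply: eq_bigr => u _; apply: pair_weightC.
rewrite /cross_weight; ring.
Qed.

Lemma clique_block_le :
  \sum_(x in K) \sum_(y in K) pair_weight W x y <= (#|K| ^ 2)%:R.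
Proof.
case: maxK => cK KW _.
apply: le_trans (cweight_complete_le #|K|).
rewrite natrM -mulrA mulr_natl -sumr_const; apply: ler_sum => x xK.
rewrite (big_setD1 x xK) /= {1}/pair_weight e_irr add0r.
have -> : #|K|.-1 = #|K :\ x| by rewrite (cardsD1 x K) xK.
rewrite mulr_natl -sumr_const; apply: ler_sum => y.
rewrite !inE => /andP[yx yK]; rewrite /pair_weight; case: ifP => exy; last exact: cweight_ge0.
have xyK : [set x; y] \subset K by rewrite subUset !sub1set xK yK.
apply: cweight_le; last exact: cnum_in_ge.
by have := subset_leq_card xyK; rewrite cards2 eq_sym yx.
Qed.

Lemma total_weight_le_split :
  total_weight W <= (#|K| ^ 2)%:R + 2%:R * \sum_(v in W :\: K) cross_weight v
                    + total_weight (W :\: K).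
Proof.
rewrite total_weight_split; apply: lerD; last exact: sum_pair_weight_sub (subsetDl W K).
by apply: lerD; first exact: clique_block_le.
Qed.

End MaxClique.

Lemma card_setDK (W K : {set V}) : K \subset W -> (#|K| + #|W :\: K|)%N = #|W|.
Proof. by move=> KW; rewrite -(cardsID K W) (setIidPr KW). Qed.

Lemma total_weight_le (W : {set V}) : total_weight W <= (#|W| ^ 2)%:R.
Proof.
have [n] := ubnP #|W|; elim: n W => // n IH W Wn.
have [->|[x xW]] := set_0Vmem W; first by rewrite /total_weight big_set0 cards0.
have [K maxK] := max_clique_exists W; have [_ KW _] := maxK.
have K0 := max_clique_gt0 maxK xW; have WK := card_setDK KW.
have IHK : total_weight (W :\: K) <= (#|W :\: K| ^ 2)%:R.
  by apply: IH; lia.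
have cross_le : \sum_(v in W :\: K) cross_weight W K v <= #|K|%:R *+ #|W :\: K|.
  by rewrite -sumr_const; apply: ler_sum => v; rewrite inE => /andP[vK vW]; apply: cross_weight_le.
apply: le_trans (total_weight_le_split maxK) _.
rewrite natrX in IHK; rewrite -mulr_natr in cross_le.
rewrite -WK !natrX natrD; nra.
Qed.

Lemma tight_card_nbhd (W K : {set V}) v :
  total_weight W = (#|W| ^ 2)%:R -> max_clique W K -> v \in W -> v \notin K ->
  (#|K :&: nbhd v|).+1 = #|K|.
Proof.
move=> tight maxK vW vK; have [_ KW _] := maxK.
have slack_ge0 u : u \in W :\: K -> 0 <= #|K|%:R - cross_weight W K u.
  by rewrite inE subr_ge0 => /andP[uK uW]; apply: cross_weight_le.
have slack0 : \sum_(u in W :\: K) (#|K|%:R - cross_weight W K u) = 0.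
  apply/eqP; rewrite eq_le sumr_ge0 // andbT sumrB sumr_const.
  have := total_weight_le_split maxK; have := total_weight_le (W :\: K).
  rewrite tight -(card_setDK KW) !natrX natrD -mulr_natr; lra.
have vWK : v \in W :\: K by rewrite inE vK vW.
have /eqP := psumr_eq0P slack_ge0 slack0 vWK; rewrite subr_eq0 => /eqP cross_eq.
apply/eqP; rewrite eqn_leq (card_nbhd_lt maxK) // -(ler_nat rat) cross_eq.
exact: cross_weight_le_nbhd.
Qed.

Section Multipartite.

Variables (X : finType) (f : V -> X).
Hypothesis ef : forall x y, e x y = (f x != f y).

Lemma cnum_multipartite x y :
  e x y -> cnum_in [set: V] [set x; y] = #|f @: [set: V]|.
Proof.
move=> exy; apply/eqP; rewrite eqn_leq; apply/andP; split.
  apply/bigmax_leqP => S /and3P[/cliqueP cS _ _].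
  have injS : {in S &, injective f}.
    move=> a b aS bS fab; apply/eqP; apply: contraT => ab.
    by have := cS a b aS bS ab; rewrite ef fab eqxx.
  by rewrite -(card_in_imset injS) subset_leq_card // imsetS // subsetT.
have fxy : f x != f y by rewrite -ef.
pose r u := if u == f x then x else if u == f y then y else odflt x [pick z | f z == u].
have frK : {in f @: [set: V], cancel r f}.
  move=> u /imsetP[z _ ->]; rewrite /r.
  case: eqP => [-> //|_]; case: eqP => [-> //|_].
  by case: pickP => [z' /eqP //|/(_ z)]; rewrite eqxx.
have injr : {in f @: [set: V] &, injective r} by move=> u w uD wD ruw; rewrite -(frK u uD) ruw frK.
rewrite -(card_in_imset injr); apply: cnum_in_ge; rewrite ?subsetT //.
  apply/cliqueP => _ _ /imsetP[u uD ->] /imsetP[w wD ->] ruw.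
  by rewrite ef !frK //; apply: contraNneq ruw => ->.
rewrite subUset !sub1set; apply/andP; split; apply/imsetP.
  by exists (f x); rewrite ?imset_f // /r eqxx.
by exists (f y); rewrite ?imset_f // /r eq_sym (negbTE fxy) eqxx.
Qed.

Lemma sum_fibres (F : X -> rat) :
  \sum_(x in [set: V]) F (f x) = \sum_(u in f @: [set: V]) F u *+ #|f @^-1: [set u]|.
Proof.
rewrite (partition_big f (fun u => u \in f @: [set: V])) => [|x _]; last exact: imset_f.
apply: eq_bigr => u _; rewrite -sumr_const; apply: eq_big => [x|x /andP[_ /eqP-> //]].
by rewrite !inE.
Qed.

Lemma total_weight_multipartite :
  total_weight [set: V] = cweight #|f @: [set: V]|
    * ((#|V| ^ 2)%:R - \sum_(u in f @: [set: V]) (#|f @^-1: [set u]| ^ 2)%:R).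
Proof.
have row x : \sum_(y in [set: V]) pair_weight [set: V] x y
             = cweight #|f @: [set: V]| * (#|V|%:R - #|f @^-1: [set f x]|%:R).
  rewrite (eq_bigr (fun y => if y \in ~: f @^-1: [set f x] then cweight #|f @: [set: V]| else 0)).
    rewrite -big_mkcondr (eq_bigl (mem (~: f @^-1: [set f x]))); last by move=> y; rewrite in_setT.
    rewrite sumr_const -[LHS]mulr_natr -(cardsC (f @^-1: [set f x])) natrD; ring.
  move=> y _; rewrite /pair_weight !inE eq_sym -ef.
  by case: ifP => // exy; rewrite cnum_multipartite.
rewrite /total_weight (eq_bigr _ (fun x _ => row x)) -mulr_sumr sumrB sumr_const cardsT.
rewrite (sum_fibres (fun u => #|f @^-1: [set u]|%:R)) natrX expr2 mulr_natr.
by congr (_ * (_ - _)); apply: eq_bigr => u _; rewrite natrX expr2 mulr_natr.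
Qed.

Lemma sum_card_fibres :
  \sum_(u in f @: [set: V]) #|f @^-1: [set u]|%:R = #|V|%:R :> rat.
Proof. by rewrite -cardsT -sumr_const (sum_fibres (fun => 1)). Qed.

Lemma balanced_of_eq_fibres :
  (2 <= #|f @: [set: V]|)%N ->
  {in f @: [set: V] &, forall u w, #|f @^-1: [set u]| = #|f @^-1: [set w]|} ->
  balanced_complete_multipartite e.
Proof.
move=> D2 eq_fibres.
have [u0 u0D] : exists u0, u0 \in f @: [set: V].
  by apply/set0Pn; rewrite -card_gt0 (leq_trans _ D2).
have fD x : f x \in f @: [set: V] by rewrite imset_f.
pose g x := enum_rank_in u0D (f x).
have fibre_g i : g @^-1: [set i] = f @^-1: [set enum_val i].
  apply/setP => x; rewrite !inE; apply/eqP/eqP => [<-|fx].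
    by rewrite /g enum_rankK_in.
  by rewrite /g fx enum_valK_in.
exists #|f @: [set: V]|, g; split => // [x y|i j].
  rewrite ef; congr negb; apply/eqP/eqP => [fxy|]; first by rewrite /g fxy.
  exact: enum_rank_in_inj.
by rewrite !fibre_g; apply: eq_fibres; apply: enum_valP.
Qed.

End Multipartite.

Section EqualityCase.

Variable K : {set V}.
Hypothesis tight : total_weight [set: V] = (#|[set: V]| ^ 2)%:R.
Hypothesis maxK : max_clique [set: V] K.

(* Every vertex outside [K] has exactly one non-neighbour in [K]
   ([setD_nbhd_part]); [part] picks it. *)
Definition part (v : V) : V := if v \in K then v else odflt v [pick u in K | ~~ e v u].

Lemma part_id v : v \in K -> part v = v.
Proof. by rewrite /part => ->. Qed.

Lemma setD_nbhd_part v : v \notin K -> K :\: nbhd v = [set part v].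
Proof.
move=> vK; have := cardsID (nbhd v) K.
rewrite -(tight_card_nbhd tight maxK (in_setT v) vK) -addn1 => /addnI/eqP/cards1P[m Km].
have mem_KN u : (u \in K :\: nbhd v) = (u \in K) && ~~ e v u by rewrite !inE andbC.
rewrite Km /part (negbTE vK); case: pickP => [u | /(_ m)]; rewrite -mem_KN Km !inE.
  by move=> /eqP->.
by rewrite eqxx.
Qed.

Lemma part_in v : part v \in K.
Proof.
have [vK|vK] := boolP (v \in K); first by rewrite part_id.
by have := set11 (part v); rewrite -setD_nbhd_part // inE => /andP[].
Qed.

Lemma adj_clique v u : u \in K -> e v u = (part v != u).
Proof.
case: maxK => /cliqueP cK _ _ uK; have [vK|vK] := boolP (v \in K).
  rewrite part_id //; have [->|vu] := eqVneq v u; first exact: e_irr.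
  exact: cK.
by rewrite eq_sym -(in_set1 u) -setD_nbhd_part // !inE uK andbT negbK.
Qed.

Lemma card_swap x : x \notin K -> #|x |: (K :\ part x)| = #|K|.
Proof.
move=> xK; rewrite cardsU1 !inE (negbTE xK) andbF add1n.
by rewrite [in RHS](cardsD1 (part x) K) part_in.
Qed.

Lemma max_clique_swap x : x \notin K -> max_clique [set: V] (x |: (K :\ part x)).
Proof.
case: maxK => cK _ maxS xK; split; rewrite ?subsetT //; last first.
  by move=> S cS _; rewrite card_swap // maxS ?subsetT.
apply: clique_setU1; first exact: clique_subset (subsetDl _ _) cK.
by move=> u; rewrite !inE => /andP[ux uK]; rewrite adj_clique // eq_sym.
Qed.

(* Two vertices outside [K] with the same [part] would extend [K :\ part x] to a
   clique larger than [K]; with different parts and no edge, [y] would have too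
   few neighbours in the maximum clique [x |: (K :\ part x)]. *)
Lemma adj_part x y : e x y = (part x != part y).
Proof.
case: (maxK) => cK _ maxS.
have [xK|xK] := boolP (x \in K); first by rewrite (part_id xK) e_sym adj_clique // eq_sym.
have [yK|yK] := boolP (y \in K); first by rewrite (part_id yK) adj_clique.
have [pxy|pxy] := eqVneq (part x) (part y).
  apply/negbTE/negP => exy.
  have adjy : {in K :\ part x, forall u, e y u}.
    by move=> u; rewrite !inE pxy => /andP[uy uK]; rewrite adj_clique // eq_sym.
  have adjx : {in y |: (K :\ part x), forall u, e x u}.
    by move=> u; rewrite !inE => /orP[/eqP->//|/andP[ux uK]]; rewrite adj_clique // eq_sym.
  have cS := clique_setU1 (clique_setU1 (clique_subset (subsetDl K _) cK) adjy) adjx.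
  have xy : x != y by apply: contraTneq exy => ->; rewrite e_irr.
  have := maxS _ cS (subsetT _); rewrite cardsU1 pxy card_swap // !inE (negbTE xK).
  by rewrite andbF orbF xy add1n ltnn.
apply/negPn/negP => nexy.
have yK' : y \notin x |: (K :\ part x).
  by rewrite !inE (negbTE yK) andbF orbF; apply: contraNneq pxy => ->.
have := tight_card_nbhd tight (max_clique_swap xK) (in_setT y) yK'.
have sub : (x |: (K :\ part x)) :&: nbhd y \subset (K :\ part x) :\ part y.
  apply/subsetP => z; rewrite !inE => /andP[/orP[/eqP->|/andP[zx zK]] eyz].
    by move: nexy; rewrite e_sym eyz.
  by rewrite zx zK !andbT eq_sym -adj_clique.
move: (subset_leq_card sub); rewrite card_swap //.
have := cardsD1 (part x) K; have := cardsD1 (part y) (K :\ part x).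
rewrite !inE !part_in eq_sym pxy.
lia.
Qed.

Lemma part_image : part @: [set: V] = K.
Proof.
apply/setP => u; apply/imsetP/idP => [[v _ ->]|uK]; first exact: part_in.
by exists u; rewrite ?part_id.
Qed.

Lemma balanced_of_tight : (0 < #|V|)%N -> balanced_complete_multipartite e.
Proof.
move=> V0; have T := total_weight_multipartite adj_part.
have n := sum_card_fibres part; rewrite part_image in T n.
set Q := \sum_(u in K) _ in T.
have t2 : (1 < #|K|)%N.
  rewrite ltnNge; apply/negP => /cweight_le1 t1; move: tight.
  rewrite T t1 mul0r cardsT => /eqP.
  by rewrite eq_sym pnatr_eq0 expn_eq0 (negbTE (lt0n_neq0 V0)).
have t1 : (#|K|%:R : rat) - 1 != 0 by rewrite subr_eq0 pnatr_eq1 gtn_eqF.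
have tQ : #|K|%:R * \sum_(u in K) #|part @^-1: [set u]|%:R ^+ 2 = #|V|%:R ^+ 2 :> rat.
  have E0 : (#|V| ^ 2)%:R = cweight #|K| * ((#|V| ^ 2)%:R - Q) by rewrite -T tight cardsT.
  have E : (#|K|%:R - 1) * (#|V| ^ 2)%:R = #|K|%:R * ((#|V| ^ 2)%:R - Q) :> rat.
    by rewrite {1}E0 /cweight mulrA mulrCA mulfV // mulr1.
  have QE : Q = \sum_(u in K) #|part @^-1: [set u]|%:R ^+ 2.
    by apply: eq_bigr => u _; rewrite natrX.
  rewrite QE natrX in E; nra.
have const := eq_const_of_sum_sqr n tQ.
apply: (balanced_of_eq_fibres adj_part); rewrite part_image // => u w uK wK.
apply/eqP; rewrite -(eqr_nat rat); apply/eqP/(mulfI (_ : #|K|%:R != 0)).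
  by rewrite pnatr_eq0 -lt0n ltnW.
by rewrite !const.
Qed.

End EqualityCase.

Lemma tight_of_balanced :
  balanced_complete_multipartite e -> total_weight [set: V] = (#|V| ^ 2)%:R.
Proof.
case=> k [g [k2 eg eq_fibres]].
have [V0|[x0 _]] := set_0Vmem [set: V].
  by rewrite /total_weight V0 big_set0 -cardsT V0 cards0.
set s := #|g @^-1: [set g x0]|.
have fibre_s i : #|g @^-1: [set i]| = s by apply: eq_fibres.
have g_onto : g @: [set: V] = [set: 'I_k].
  apply/setP => i; rewrite in_setT; have : (0 < #|g @^-1: [set i]|)%N.
    by rewrite fibre_s card_gt0; apply/set0Pn; exists x0; rewrite !inE.
  by rewrite card_gt0 => /set0Pn[x]; rewrite !inE => /eqP <-; rewrite imset_f.
have n := sum_card_fibres g; rewrite g_onto (eq_bigr _ (fun i _ => congr1 _ (fibre_s i))) in n.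
rewrite (total_weight_multipartite eg) g_onto (eq_bigr _ (fun i _ => congr1 (fun m => (m ^ 2)%:R) (fibre_s i))).
rewrite !sumr_const cardsT card_ord in n *; rewrite /cweight !natrX -n.
have k1 : (k%:R : rat) - 1 != 0 by rewrite subr_eq0 pnatr_eq1 gtn_eqF.
by field.
Qed.

Lemma tight_iff_balanced :
  total_weight [set: V] = (#|V| ^ 2)%:R <-> balanced_complete_multipartite e.
Proof.
split=> [tight|]; last exact: tight_of_balanced.
have [V0|V0] := posnP #|V|.
  exists 2%N, (fun=> ord0); split => // [x|i j]; first by have := card0_eq V0 x.
  have fibre0 (l : 'I_2) : #|(fun _ : V => ord0) @^-1: [set l]| = 0%N.
    by apply/eqP; rewrite -leqn0 (leq_trans (subset_leq_card (subsetT _))) // cardsT V0.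
  by rewrite !fibre0.
have [K maxK] := max_clique_exists [set: V].
by apply: (balanced_of_tight _ maxK); rewrite // cardsT.
Qed.

End Graph.

Unset Implicit Arguments. Set Strict Implicit.

Theorem theorem1 (V : finType) (e : rel V) (n : nat) :
  simple_graph e -> #|V| = n ->
  (\sum_(E in edges e) ((cnum e E)%:R / ((cnum e E)%:R - 1)) : rat)
    <= (n ^ 2)%:R / 2%:R
  /\
  ((\sum_(E in edges e) ((cnum e E)%:R / ((cnum e E)%:R - 1)) : rat)
    = (n ^ 2)%:R / 2%:R
   <-> balanced_complete_multipartite e).
Proof.
move=> [e_sym e_irr] <-.
have -> : \sum_(E in edges e) ((cnum e E)%:R / ((cnum e E)%:R - 1))
          = total_weight e [set: V] / 2%:R := sum_edges_cweight e_sym e_irr.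
have half_neq0 : (2%:R : rat)^-1 != 0 by rewrite invr_eq0 pnatr_eq0.
split.
  by rewrite ler_wpM2r ?invr_ge0 // -cardsT total_weight_le.
rewrite -(tight_iff_balanced e_sym e_irr).
by split=> [/(mulIf half_neq0)|->].
Qed.
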